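(* Consider the coordination game ($\mathcal V_c=\mathcal V$). (1) If $x^*$ is a Nash equilibrium and $z^*=z(x^* )$, then $z^*=F_c\!\left(\frac{n}{n-1}(z^*-\epsilon_c)\right)$ for every $\epsilon_c\in(0,\tfrac1n]$. (2) Conversely, if $z^*\in\{0,\tfrac1n,\dots,1\}$ satisfies $z^*=F_c\!\left(\frac{n}{n-1}(z^*-\epsilon_c)\right)$ for every $\epsilon_c\in(0,\tfrac1n]$, then there exists a Nash equilibrium $x^*$ with $z(x^* )=z^*$.
   Context: Let $\mathcal V$ be a finite set of $n\ge2$ agents, all coordinating. Given real weights $d_i$, the coordination game has action set $\{-1,+1\}$, configuration space $\mathcal X=\{-1,+1\}^{\mathcal V}$ and utilities $u_i(x)=\sum_{j\neq i}x_ix_j-d_ix_i$. A (pure) Nash equilibrium is an $x\in\mathcal X$ with $u_i(x)\ge u_i(y_i,x_{-i})$ for all $i$ and $y_i\in\{-1,+1\}$. Thresholds: $r_i=\tfrac12+\tfrac{d_i}{2(n-1)}$. For $x\in\mathcal X$, $z(x)=\frac1n|\{i: x_i=+1\}|$. The threshold CDF is $F_c(t)=\frac1n|\{i\in\mathcal V: r_i\le t\}|$, $t\in\mathbb R$. *)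

(* Reals are an arbitrary realFieldType R (the statement is
   purely order-theoretic/algebraic, so this generalizes the real numbers). *)
From HB Require Import structures.
From mathcomp Require Import all_boot all_order all_algebra.
Set Implicit Arguments. Unset Strict Implicit. Unset Printing Implicit Defensive.
Import Order.TTheory GRing.Theory Num.Theory.
Local Open Scope ring_scope.

Definition act (R : realFieldType) (b : bool) : R := if b then 1 else -1.

Definition config (n : nat) := {ffun 'I_n -> bool}.

Definition deviate (n : nat) (x : config n) (i : 'I_n) (y : bool) : config n :=
  [ffun j => if j == i then y else x j].

Definition utility (R : realFieldType) (n : nat) (d : 'I_n -> R)
    (i : 'I_n) (x : config n) : R :=
  \sum_(j < n | j != i) act R (x i) * act R (x j) - d i * act R (x i).

Definition nash (R : realFieldType) (n : nat) (d : 'I_n -> R) (x : config n) : Prop :=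
  forall (i : 'I_n) (y : bool), utility d i (deviate x i y) <= utility d i x.

Definition threshold (R : realFieldType) (n : nat) (d : 'I_n -> R) (i : 'I_n) : R :=
  2^-1 + d i / (2 * (n%:R - 1)).

Definition zfrac (R : realFieldType) (n : nat) (x : config n) : R :=
  #|[set i | x i]|%:R / n%:R.

Definition Fc (R : realFieldType) (n : nat) (d : 'I_n -> R) (t : R) : R :=
  #|[set i | threshold d i <= t]|%:R / n%:R.

From HB Require Import structures.
From mathcomp Require Import all_boot all_order all_algebra.
From mathcomp Require Import ring lra.
Set Implicit Arguments. Unset Strict Implicit. Unset Printing Implicit Defensive.
Import Order.TTheory GRing.Theory Num.Theory.
Local Open Scope ring_scope.

(* With m players at +1, agent i prefers +1 exactly when
   sum_{j <> i} x_j = 2m - n - x_i >= d_i.  Hence x is a Nash equilibrium iff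
   every +1 player has d_i <= 2m - n - 1 and every -1 player has
   d_i >= 2m - n + 1.  On the other hand r_i <= n/(n-1) (m/n - eps) reads
   d_i <= 2m - n - 1 + 2(1 - n eps), a cutoff in [2m - n - 1, 2m - n + 1) for
   eps in (0, 1/n]; so the agents counted by F_c are exactly the +1 players.
   Conversely, eps = 1/n shows that exactly k agents have d_i <= 2k - n - 1,
   and letting eps vary shows that no d_i lies strictly between 2k - n - 1 and
   2k - n + 1; putting those k agents at +1 is then an equilibrium. *)

Section CoordinationGame.

Variables (R : realFieldType) (n : nat) (d : 'I_n -> R).
Hypothesis n_ge2 : (2 <= n)%N.

Definition cutoff (m : nat) : R := 2 * m%:R - n%:R - 1.

Lemma sum_act_card (x : config n) :
  \sum_(j < n) act R (x j) = 2 * #|[set i | x i]|%:R - n%:R.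
Proof.
rewrite (bigID (fun j => x j)) /=.
rewrite (eq_bigr (fun _ => 1)); last by move=> j ->.
rewrite [X in _ + X](eq_bigr (fun _ => -1)); last by move=> j /negbTE ->.
rewrite !sumr_const.
have -> : #|(fun j => x j)| = #|[set i | x i]|.
  by apply: eq_card => j; rewrite inE.
have -> : #|(fun j => ~~ x j)| = #|~: [set i | x i]|.
  by apply: eq_card => j; rewrite !inE.
have n_split : n%:R = #|[set i | x i]|%:R + #|~: [set i | x i]|%:R :> R.
  by rewrite -natrD cardsC card_ord.
by rewrite n_split -mulr_natr; ring.
Qed.

Lemma sum_act_neq (x : config n) (i : 'I_n) :
  \sum_(j < n | j != i) act R (x j) = 2 * #|[set i | x i]|%:R - n%:R - act R (x i).
Proof. by rewrite -sum_act_card [X in _ = X - _](bigD1 i) //= addrC addrK. Qed.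

Lemma deviate_self (x : config n) (i : 'I_n) : deviate x i (x i) = x.
Proof. by apply/ffunP => j; rewrite ffunE; case: eqP => [->|]. Qed.

Lemma utility_deviate (x : config n) (i : 'I_n) (y : bool) :
  utility d i (deviate x i y) = act R y * (\sum_(j < n | j != i) act R (x j) - d i).
Proof.
rewrite /utility mulrBr mulr_sumr ffunE eqxx mulrC; congr (_ - _).
by apply: eq_bigr => j /negbTE j_neq_i; rewrite ffunE j_neq_i.
Qed.

Lemma utility_act (x : config n) (i : 'I_n) :
  utility d i x = act R (x i) * (\sum_(j < n | j != i) act R (x j) - d i).
Proof. by rewrite -{1}(deviate_self x i) utility_deviate. Qed.

Lemma nashP (x : config n) :
  nash d x <-> forall i, if x i then d i <= cutoff #|[set i | x i]|
                        else cutoff #|[set i | x i]| + 2 <= d i.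
Proof.
rewrite /cutoff; split=> [eq_x i | best_x i y].
  have := eq_x i (~~ x i); rewrite utility_deviate utility_act sum_act_neq.
  by case: (x i); rewrite /act /=; lra.
rewrite utility_deviate utility_act sum_act_neq.
by have := best_x i; case: (x i); case: y; rewrite /act; lra.
Qed.

Lemma threshold_le_shift (i : 'I_n) (k : nat) (e : R) :
  (threshold d i <= n%:R / (n%:R - 1) * (k%:R / n%:R - e)) =
  (d i <= cutoff k + 2 * (1 - n%:R * e)).
Proof.
have n_ge2R : 2%:R <= n%:R :> R by rewrite ler_nat.
have scale_gt0 : 0 < 2 * (n%:R - 1 : R) by lra.
have n1_neq0 : (n%:R - 1 : R) != 0 by rewrite gt_eqF //; lra.
have n_neq0 : (n%:R : R) != 0 by rewrite gt_eqF //; lra.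
rewrite -(ler_pM2l scale_gt0) /cutoff.
have -> : 2 * (n%:R - 1) * threshold d i = (n%:R - 1) + d i.
  by rewrite /threshold; field; rewrite n1_neq0.
have -> : 2 * (n%:R - 1) * (n%:R / (n%:R - 1) * (k%:R / n%:R - e)) =
          2 * (k%:R - n%:R * e) by field; rewrite n_neq0 n1_neq0.
by rewrite -lerBrDl; congr (_ <= _); ring.
Qed.

Lemma n_gt0 : 0 < n%:R :> R.
Proof. by rewrite ltr0n; case: n n_ge2. Qed.

Lemma Fc_frac (t : R) (k : nat) :
  Fc d t = k%:R / n%:R <-> #|[set i | threshold d i <= t]| = k.
Proof.
have n_neq0 : n%:R != 0 :> R by rewrite gt_eqF // n_gt0.
rewrite /Fc; split=> [/(congr1 ( *%R^~ n%:R)) | ->] //.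
by rewrite !mulfVK // => /eqP; rewrite eqr_nat => /eqP.
Qed.

Lemma eps_range (eps : R) :
  0 < eps -> eps <= n%:R^-1 -> 0 < n%:R * eps <= 1.
Proof.
move=> eps_gt0 eps_le; rewrite mulr_gt0 ?n_gt0 //=.
by rewrite -ler_pdivlMl ?n_gt0 // mulr1.
Qed.

Lemma nash_threshold_set (x : config n) (eps : R) :
  nash d x -> 0 < eps -> eps <= n%:R^-1 ->
  [set i | threshold d i <= n%:R / (n%:R - 1) * (zfrac R x - eps)] = [set i | x i].
Proof.
move=> /nashP eq_x eps_gt0 eps_le; have /andP[ne_gt0 ne_le1] := eps_range eps_gt0 eps_le.
apply/setP => i; rewrite !inE threshold_le_shift.
by have := eq_x i; case: (x i) => d_i; [apply/idP | apply/negbTE; rewrite -ltNge]; lra.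
Qed.

Variable k : nat.
Hypothesis Fc_fixed : forall eps : R, 0 < eps -> eps <= n%:R^-1 ->
  k%:R / n%:R = Fc d (n%:R / (n%:R - 1) * (k%:R / n%:R - eps)).

Lemma card_cutoff : #|[set i | d i <= cutoff k]| = k.
Proof.
have inv_n_gt0 : 0 < n%:R^-1 :> R by rewrite invr_gt0 n_gt0.
have /esym/Fc_frac card_eq := Fc_fixed inv_n_gt0 (lexx _).
rewrite -[in RHS]card_eq; apply: eq_card => i.
by rewrite !inE threshold_le_shift mulfV ?gt_eqF ?n_gt0 // subrr mulr0 addr0.
Qed.

(* A d_i in (cutoff k, cutoff k + 2) would be picked up by F_c for a suitable
   eps, making the counted set strictly larger than the k agents below the cutoff. *)
Lemma cutoff_gap (i : 'I_n) : cutoff k < d i -> cutoff k + 2 <= d i.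
Proof.
move=> d_i_gt; rewrite leNgt; apply/negP => d_i_lt.
pose eps := (cutoff k + 2 - d i) / (2 * n%:R).
have two_n_gt0 : 0 < 2 * n%:R :> R by rewrite mulr_gt0 ?n_gt0.
have eps_gt0 : 0 < eps by rewrite divr_gt0 //; lra.
have eps_le : eps <= n%:R^-1.
  rewrite ler_pdivrMr // mulrCA mulVf ?gt_eqF ?n_gt0 // mulr1; lra.
have d_i_eq : cutoff k + 2 * (1 - n%:R * eps) = d i.
  by rewrite /eps; field; rewrite gt_eqF ?n_gt0.
have /esym/Fc_frac card_eq := Fc_fixed eps_gt0 eps_le.
have : [set j | d j <= cutoff k] \proper
       [set j | threshold d j <= n%:R / (n%:R - 1) * (k%:R / n%:R - eps)].
  apply/properP; split.
    by apply/subsetP => j; rewrite !inE threshold_le_shift d_i_eq; lra.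
  by exists i; rewrite !inE ?threshold_le_shift ?d_i_eq; lra.
by move/proper_card; rewrite card_eq card_cutoff ltnn.
Qed.

Lemma nash_cutoff : nash d [ffun i => d i <= cutoff k].
Proof.
have card_x : #|[set i | [ffun i => d i <= cutoff k] i]| = k.
  by rewrite -[in RHS]card_cutoff; apply: eq_card => j; rewrite !inE ffunE.
apply/nashP => i; rewrite card_x ffunE.
by case: ifP => // /negbT; rewrite -ltNge => /cutoff_gap.
Qed.

Lemma zfrac_cutoff : zfrac R [ffun i => d i <= cutoff k] = k%:R / n%:R.
Proof.
rewrite /zfrac -[in RHS]card_cutoff; congr (_%:R / _).
by apply: eq_card => j; rewrite !inE ffunE.
Qed.

End CoordinationGame.

Theorem corollary1 (R : realFieldType) (n : nat) (hn : (2 <= n)%N) (d : 'I_n -> R) :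
  (forall x : config n, nash d x ->
     forall eps : R, 0 < eps -> eps <= n%:R^-1 ->
       zfrac R x = Fc d (n%:R / (n%:R - 1) * (zfrac R x - eps)))
  /\
  (forall k : nat, (k <= n)%N ->
     (forall eps : R, 0 < eps -> eps <= n%:R^-1 ->
        k%:R / n%:R = Fc d (n%:R / (n%:R - 1) * (k%:R / n%:R - eps))) ->
     exists x : config n, nash d x /\ zfrac R x = k%:R / n%:R).
Proof.
split=> [x eq_x eps eps_gt0 eps_le | k _ Fc_fixed].
  by rewrite /Fc nash_threshold_set.
exists [ffun i => d i <= cutoff R n k]; split.
  exact (nash_cutoff hn Fc_fixed).
exact (zfrac_cutoff hn Fc_fixed).
Qed.
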